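(* Let $G$ be a finite group, $n\ge 2$, put $g_1=1$, and let $g_2,\dots,g_n\in G$ be nontrivial elements (possibly with repetitions). Let $S=\mathscr M(G,n,n,C)$ where $C$ is the $n\times n$ matrix with $C_{ii}=g_i$ for all $i$ and $C_{ij}=1$ for $i\ne j$. Then both the minimal degree of a faithful action of $S$ by partial transformations and by total transformations equal $$\min\Big\{n\cdot|X|-\sum_{x\in X}\big|\{2\le i\le n\mid g_i\in G_x\}\big|\Big\},$$ where $X$ runs over all faithful right $G$-sets (equivalently, all faithful $G$-sets with no two isomorphic orbits) and $G_x$ is the stabilizer of $x$. In particular, if $g_2=\cdots=g_n=g\ne1$, both minimal degrees equal $\min\{n\deg(\rho)-(n-1)|\mathrm{Fix}(\rho(g))|\}$ as $\rho$ runs over all faithful permutation representations of $G$ (equivalently, those with no two isomorphic orbits).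
   Context: For a group $G$ and matrix $C\colon[n]\times[n]\to G$, the Rees matrix semigroup $\mathscr M(G,n,n,C)$ is $[n]\times G\times[n]$ with $(i,g,j)(k,h,l)=(i,gC_{jk}h,l)$. The minimal degree of a faithful action by partial (resp. total) transformations is the least $m$ such that $S$ embeds in the monoid of partial (resp. total) maps of an $m$-set acting on the right. $\mathrm{Fix}(\rho(g))$ is the set of points fixed by $\rho(g)$; $\deg(\rho)$ is the number of points. *)

From mathcomp Require Import all_boot all_fingroup.
Set Implicit Arguments. Unset Strict Implicit. Unset Printing Implicit Defensive.
Local Open Scope group_scope.

Definition is_least (P : nat -> Prop) (d : nat) : Prop :=
  P d /\ forall m, P m -> (d <= m)%N.

Definition rees_elt (gT : finGroupType) (n : nat) := ('I_n * gT * 'I_n)%type.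

Definition rees_mul (gT : finGroupType) (n : nat) (C : 'I_n -> 'I_n -> gT)
  (a b : rees_elt gT n) : rees_elt gT n :=
  let: (i, x, j) := a in let: (k, y, l) := b in (i, x * C j k * y, l).

Definition diag_sandwich (gT : finGroupType) (n : nat) (g : 'I_n -> gT)
  (i j : 'I_n) : gT := if i == j then g i else 1.

(* S embeds (faithful right action) into the monoid of partial transformations
   of an m-set: (s t) acts as "first s, then t". *)
Definition faithful_partial_degree (S : Type) (mul : S -> S -> S) (m : nat) : Prop :=
  exists phi : S -> {ffun 'I_m -> option 'I_m},
    injective phi /\
    forall s t x, phi (mul s t) x = obind (phi t) (phi s x).

Definition faithful_total_degree (S : Type) (mul : S -> S -> S) (m : nat) : Prop :=
  exists phi : S -> {ffun 'I_m -> 'I_m},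
    injective phi /\
    forall s t x, phi (mul s t) x = phi t (phi s x).

Definition is_raction (gT : finGroupType) (k : nat) (act : 'I_k -> gT -> 'I_k) : Prop :=
  (forall x, act x 1 = x) /\ (forall x a b, act x (a * b) = act (act x a) b).

Definition faithful_raction (gT : finGroupType) (k : nat) (act : 'I_k -> gT -> 'I_k) : Prop :=
  forall a, (forall x, act x a = x) -> a = 1.

(* n |X| - sum_{x in X} |{ 2 <= i <= n | g_i in G_x }|  (index 0 plays the role of 1). *)
Definition gset_cost (gT : finGroupType) (n : nat) (g : 'I_n -> gT)
  (k : nat) (act : 'I_k -> gT -> 'I_k) : nat :=
  (n * k - \sum_(x : 'I_k) #|[set i : 'I_n | (val i != 0%N) && (act x (g i) == x)]|)%N.

(* Group homomorphism into Sym(k) (mathcomp permutations compose left-to-right). *)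
Definition perm_rep (gT : finGroupType) (k : nat) (rho : gT -> {perm 'I_k}) : Prop :=
  forall a b, rho (a * b) = rho a * rho b.

(* Upper bound: a faithful right G-set X yields the action
   (x, j)(i, a, l) = (x C_ji a, l) of S on X x [n]. Identifying (x, j) with
   (x, 1) whenever g_j fixes x (j >= 2) is compatible with this action, and the
   quotient is still faithful because a nontrivial g_j cannot fix every point.
   It has n|X| - sum_x |{j >= 2 | g_j in G_x}| points.
   Lower bound: in a faithful partial action, G acts faithfully through
   a |-> (1, a, 1) on the fixed points Y of the idempotent (1, 1, 1), and
   (y, j) |-> y (1, 1, j) is injective on the pairs that are not identified
   above: if y (1, 1, j) = y (1, 1, j') with j <> j', multiplying by (j, 1, 1)
   shows g_j in G_y, and symmetrically g_j' in G_y. So the degree is at least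
   the cost of the G-set Y. Since total actions are partial ones, both minimal
   degrees equal the least cost; for constant g_j = g the cost of a
   permutation representation rho is n deg rho - (n - 1) |Fix (rho g)|. *)

From mathcomp Require Import all_boot all_fingroup.
From Stdlib Require Import Classical.
Set Implicit Arguments. Unset Strict Implicit. Unset Printing Implicit Defensive.
Local Open Scope group_scope.

Lemma is_least_exists (P : nat -> Prop) : (exists n, P n) -> exists d, is_least P d.
Proof.
move=> [n Pn]; elim/ltn_ind: n Pn => n IHn Pn.
have [[m [ltmn Pm]] | no_less] := classic (exists m, (m < n)%N /\ P m).
  exact: IHn Pm.
exists n; split=> // m Pm; rewrite leqNgt; apply/negP => ltmn.
by apply: no_less; exists m.
Qed.

Lemma is_least_sandwich (P Q R : nat -> Prop) d :
  is_least P d -> (forall c, P c -> Q c) -> (forall c, Q c -> R c) ->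
  (forall m, R m -> exists2 c, P c & (c <= m)%N) ->
  is_least Q d /\ is_least R d.
Proof.
move=> [Pd d_min] PQ QR R_bound.
have d_le m : R m -> (d <= m)%N.
  by case/R_bound=> c /d_min; apply: leq_trans.
split; split=> [|m]; first exact: PQ.
- by move/QR; apply: d_le.
- exact: QR (PQ _ Pd).
- exact: d_le.
Qed.

Lemma is_least_equiv (P Q : nat -> Prop) d :
  (forall c, P c <-> Q c) -> is_least P d -> is_least Q d.
Proof. by move=> PQ [/PQ Qd d_min]; split=> // m /PQ; apply: d_min. Qed.

Lemma faithful_total_partial_degree (S : Type) (mul : S -> S -> S) m :
  faithful_total_degree mul m -> faithful_partial_degree mul m.
Proof.
case=> phi [phi_inj phiM]; exists (fun s => [ffun x => Some (phi s x)]); split.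
  move=> s t /ffunP eq_st; apply: phi_inj; apply/ffunP => x.
  by have := eq_st x; rewrite !ffunE => -[].
by move=> s t x; rewrite !ffunE /= ffunE phiM.
Qed.

Section FaithfulActionOnSubset.
Variables (S : Type) (mul : S -> S -> S) (T : finType) (A : {set T}) (f : T -> S -> T).
Hypothesis f_in : forall s, {in A, forall p, f p s \in A}.
Hypothesis fM : forall s t, {in A, forall p, f p (mul s t) = f (f p s) t}.
Hypothesis f_faithful : forall s t, {in A, forall p, f p s = f p t} -> s = t.

Definition enum_transf (s : S) : {ffun 'I_#|A| -> 'I_#|A|} :=
  [ffun q => enum_rank_in (enum_valP q) (f (enum_val q) s)].

Lemma enum_transfE s q : enum_val (enum_transf s q) = f (enum_val q) s.
Proof. by rewrite ffunE enum_rankK_in // f_in // enum_valP. Qed.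

Lemma faithful_total_degree_subset : faithful_total_degree mul #|A|.
Proof.
exists enum_transf; split=> [s t /ffunP eq_st | s t q]; last first.
  by apply: enum_val_inj; rewrite !enum_transfE fM ?enum_valP.
apply: f_faithful => p Ap.
by have := congr1 enum_val (eq_st (enum_rank_in Ap p)); rewrite !enum_transfE enum_rankK_in.
Qed.

End FaithfulActionOnSubset.

Section RightAction.
Variables (gT : finGroupType) (k : nat) (act : 'I_k -> gT -> 'I_k).
Hypothesis act_ok : is_raction act.

Lemma raction1 x : act x 1 = x.
Proof. by case: act_ok. Qed.

Lemma ractionM x a b : act x (a * b) = act (act x a) b.
Proof. by case: act_ok. Qed.

Lemma ractionK a : cancel (act^~ a) (act^~ a^-1).
Proof. by move=> x; rewrite -ractionM mulgV raction1. Qed.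

Lemma ractionVK a : cancel (act^~ a^-1) (act^~ a).
Proof. by move=> x; rewrite -ractionM mulVg raction1. Qed.

Lemma faithful_raction_inj :
  faithful_raction act -> forall a b, (forall x, act x a = act x b) -> a = b.
Proof.
move=> act_faithful a b eq_ab; apply/eqP; rewrite eq_mulgV1; apply/eqP.
by apply: act_faithful => x; rewrite ractionM eq_ab ractionK.
Qed.

End RightAction.

Section Cost.
Variables (gT : finGroupType) (n : nat) (g : 'I_n -> gT).
Variables (T : finType) (act : T -> gT -> T).

Definition fixes_index (x : T) (i : 'I_n) : bool := (val i != 0%N) && (act x (g i) == x).

Definition set_cost (Y : {set T}) : nat :=
  (n * #|Y| - \sum_(y in Y) #|[set i | fixes_index y i]|)%N.

Definition kept_pairs (Y : {set T}) : {set T * 'I_n} :=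
  [set p | (p.1 \in Y) && ~~ fixes_index p.1 p.2].

Lemma in_kept_pairs Y p : (p \in kept_pairs Y) = (p.1 \in Y) && ~~ fixes_index p.1 p.2.
Proof. by rewrite inE. Qed.

Lemma card_kept_pairs Y : #|kept_pairs Y| = set_cost Y.
Proof.
have card_kept_fiber y :
    #|[set i | ~~ fixes_index y i]| = (n - #|[set i | fixes_index y i]|)%N.
  by rewrite cardsCs card_ord; congr (_ - _)%N; apply: eq_card => i; rewrite !inE negbK.
transitivity (\sum_(y in Y) #|[set i | ~~ fixes_index y i]|).
  rewrite -sum1dep_card; under [RHS]eq_bigr do rewrite -sum1dep_card.
  by rewrite pair_big_dep.
under eq_bigr do rewrite card_kept_fiber.
rewrite sumnB => [|y _]; last by rewrite -[leqRHS]card_ord max_card.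
by rewrite sum_nat_const mulnC.
Qed.

End Cost.

Lemma gset_costE (gT : finGroupType) n (g : 'I_n -> gT) k (act : 'I_k -> gT -> 'I_k) :
  gset_cost g act = set_cost g act [set: 'I_k].
Proof.
rewrite /gset_cost /set_cost cardsT card_ord; congr (_ - _)%N.
by apply: eq_bigl => x; rewrite inE.
Qed.

Definition faithful_gset_cost (gT : finGroupType) n (g : 'I_n -> gT) (c : nat) : Prop :=
  exists k (act : 'I_k -> gT -> 'I_k),
    is_raction act /\ faithful_raction act /\ c = gset_cost g act.

Section GSetOnSubset.
Variables (gT : finGroupType) (T : finType) (act : T -> gT -> T) (Y : {set T}).
Hypothesis act_in : forall a, {in Y, forall y, act y a \in Y}.
Hypothesis act1 : {in Y, forall y, act y 1 = y}.
Hypothesis actM : forall a b, {in Y, forall y, act y (a * b) = act (act y a) b}.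
Hypothesis act_faithful : forall a, {in Y, forall y, act y a = y} -> a = 1.

Definition enum_ract (q : 'I_#|Y|) (a : gT) : 'I_#|Y| :=
  enum_rank_in (enum_valP q) (act (enum_val q) a).

Lemma enum_ractE q a : enum_val (enum_ract q a) = act (enum_val q) a.
Proof. by rewrite enum_rankK_in // act_in // enum_valP. Qed.

Lemma faithful_gset_cost_subset n (g : 'I_n -> gT) : faithful_gset_cost g (set_cost g act Y).
Proof.
exists #|Y|, enum_ract; split; [split|split].
- by move=> q; apply: enum_val_inj; rewrite enum_ractE act1 // enum_valP.
- by move=> q a b; apply: enum_val_inj; rewrite !enum_ractE actM // enum_valP.
- move=> a fix_a; apply: act_faithful => y Yy.
  by have := congr1 enum_val (fix_a (enum_rank_in Yy y)); rewrite enum_ractE enum_rankK_in.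
rewrite gset_costE /set_cost cardsT card_ord; congr (_ - _)%N.
rewrite (big_enum_val (A := mem Y)); apply: eq_big => [q|q _]; first by rewrite inE.
by apply: eq_card => i; rewrite !inE /fixes_index -(inj_eq enum_val_inj) enum_ractE.
Qed.

End GSetOnSubset.

Lemma faithful_gset_cost_exists (gT : finGroupType) n (g : 'I_n -> gT) :
  exists c, faithful_gset_cost g c.
Proof.
exists (set_cost g (fun y a : gT => y * a) [set: gT]).
apply: faithful_gset_cost_subset => [a y _|y _|a b y _|a fix_a].
- by rewrite inE.
- exact: mulg1.
- exact: mulgA.
- by rewrite -[a]mul1g fix_a ?inE.
Qed.

Section ReesDiagonal.
Variables (gT : finGroupType) (n : nat) (g : 'I_n.+1 -> gT).
Hypothesis g_val0 : forall i : 'I_n.+1, val i = 0%N -> g i = 1.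
Hypothesis g_neq1 : forall i : 'I_n.+1, val i <> 0%N -> g i <> 1.

Let g_ord0 : g ord0 = 1 := g_val0 (i := ord0) erefl.

Let g_eq1 i : g i = 1 -> i = ord0.
Proof.
move=> gi1; have [i0|/eqP i_neq0] := eqVneq (val i) 0%N; first exact: val_inj.
by case: (g_neq1 i_neq0).
Qed.

Local Notation C := (diag_sandwich g).
Local Notation mul := (rees_mul C).
Local Notation S := (rees_elt gT n.+1).

Lemma diag_sandwich0l i : C ord0 i = 1.
Proof. by rewrite /diag_sandwich; case: eqP => // <-. Qed.

Lemma diag_sandwich0r i : C i ord0 = 1.
Proof. by rewrite /diag_sandwich; case: eqP => // ->. Qed.

Lemma diag_sandwich_diag i : C i i = g i.
Proof. by rewrite /diag_sandwich eqxx. Qed.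

Lemma diag_sandwich_offdiag i j : i != j -> C i j = 1.
Proof. by rewrite /diag_sandwich => /negbTE ->. Qed.

Section UpperBound.
Variables (k : nat) (act : 'I_k -> gT -> 'I_k).
Hypothesis act_ok : is_raction act.
Hypothesis act_faithful : faithful_raction act.

Local Notation fixes := (fixes_index g act).

Definition collapse (p : 'I_k * 'I_n.+1) : 'I_k * 'I_n.+1 :=
  if fixes p.1 p.2 then (p.1, ord0) else p.

Definition rees_ract (p : 'I_k * 'I_n.+1) (s : S) : 'I_k * 'I_n.+1 :=
  let: (i, a, l) := s in (act p.1 (C p.2 i * a), l).

Lemma collapse_fst p : (collapse p).1 = p.1.
Proof. by rewrite /collapse; case: ifP. Qed.

Lemma collapse_kept p : collapse p \in kept_pairs g act [set: 'I_k].
Proof. by rewrite /collapse !inE; case: ifP => [_|->] //=; rewrite /fixes_index eqxx. Qed.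

Lemma rees_ract_collapse p s : rees_ract (collapse p) s = rees_ract p s.
Proof.
case: p => x j; case: s => [[i a] l]; rewrite /collapse.
case: ifP => //= /andP[_ /eqP xgj]; congr (_, _).
rewrite diag_sandwich0l mul1g; have [<-|neq_ji] := eqVneq j i.
  by rewrite diag_sandwich_diag (ractionM act_ok) xgj.
by rewrite diag_sandwich_offdiag // mul1g.
Qed.

Lemma rees_ractM p s t : rees_ract p (mul s t) = rees_ract (rees_ract p s) t.
Proof.
case: p => x j; case: s => [[i a] l]; case: t => [[i' b] l'].
by rewrite /= -!(ractionM act_ok) !mulgA.
Qed.

Lemma collapse_snd_neq_ord0 l l' :
  (forall x, (collapse (x, l)).2 = (collapse (x, l')).2) -> l != l' -> l = ord0.
Proof.
move=> eq_l neq_ll'; apply: g_eq1.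
apply: (faithful_raction_inj act_ok act_faithful) => x; rewrite (raction1 act_ok).
have := eq_l x; rewrite /collapse /fixes_index /=.
have [/eqP //|_ /=] := boolP (act x (g l) == x).
rewrite andbF; case: ifP => _ /= eq_l0; last by rewrite eq_l0 eqxx in neq_ll'.
by rewrite eq_l0 g_ord0 (raction1 act_ok).
Qed.

Lemma collapse_snd_inj l l' :
  (forall x, (collapse (x, l)).2 = (collapse (x, l')).2) -> l = l'.
Proof.
move=> eq_l; have [//|neq_ll'] := eqVneq l l'.
have eq_l' x : (collapse (x, l')).2 = (collapse (x, l)).2 by rewrite eq_l.
by rewrite (collapse_snd_neq_ord0 eq_l neq_ll') (collapse_snd_neq_ord0 eq_l') // eq_sym.
Qed.

Lemma rees_ract_faithful s t :
  (forall p, collapse (rees_ract p s) = collapse (rees_ract p t)) -> s = t.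
Proof.
case: s => [[i a] l]; case: t => [[i' b] l'] eq_st.
have eq_snd x j : act x (C j i * a) = act x (C j i' * b).
  by have := congr1 fst (eq_st (x, j)); rewrite !collapse_fst.
have eq_ab : a = b.
  apply: (faithful_raction_inj act_ok act_faithful) => x.
  by have := eq_snd x ord0; rewrite !diag_sandwich0l !mul1g.
subst b; have eq_ii' : i = i'.
  have diag_eq1 j j' : j != j' -> act^~ (C j j * a) =1 act^~ (C j j' * a) -> j = ord0.
    move=> neq_jj' eq_j; apply: g_eq1; apply: (mulIg a); rewrite mul1g.
    apply: (faithful_raction_inj act_ok act_faithful) => x.
    by rewrite -diag_sandwich_diag eq_j diag_sandwich_offdiag // mul1g.
  have [//|neq_ii'] := eqVneq i i'.
  have i_eq0 := diag_eq1 i i' neq_ii' (eq_snd^~ i).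
  have neq_i'i : i' != i by rewrite eq_sym.
  have i'_eq0 := diag_eq1 i' i neq_i'i (fun x => esym (eq_snd x i')).
  by rewrite i_eq0 i'_eq0 eqxx in neq_ii'.
subst i'; congr (_, _, _); apply: collapse_snd_inj => y.
have := congr1 snd (eq_st (act y a^-1, ord0)).
by rewrite /= diag_sandwich0l mul1g (ractionVK act_ok).
Qed.

Lemma faithful_total_degree_gset : faithful_total_degree mul (gset_cost g act).
Proof.
rewrite gset_costE -card_kept_pairs.
apply: (faithful_total_degree_subset (f := fun p s => collapse (rees_ract p s))).
- by move=> s p _; apply: collapse_kept.
- by move=> s t p _; rewrite rees_ract_collapse rees_ractM.
move=> s t eq_st; apply: rees_ract_faithful => p.
by rewrite -rees_ract_collapse eq_st ?collapse_kept // rees_ract_collapse.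
Qed.

End UpperBound.

Section LowerBound.
Variables (m : nat) (phi : S -> {ffun 'I_m -> option 'I_m}).
Hypothesis phi_inj : injective phi.
Hypothesis phiM : forall s t x, phi (mul s t) x = obind (phi t) (phi s x).

Definition grp (a : gT) : S := (ord0, a, ord0).

Lemma mul_grp a b : mul (grp a) (grp b) = grp (a * b).
Proof. by rewrite /= diag_sandwich0l mulg1. Qed.

Lemma mul_row_grp1 j : mul (ord0, 1, j) (grp 1) = grp 1.
Proof. by rewrite /= diag_sandwich0r !mulg1. Qed.

Lemma mul_row_col j : mul (ord0, 1, j) (j, 1, ord0) = grp (g j).
Proof. by rewrite /= diag_sandwich_diag mulg1 mul1g. Qed.

Lemma mul_row_col_neq j j' : j' != j -> mul (ord0, 1, j') (j, 1, ord0) = grp 1.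
Proof. by move=> neq_j'j; rewrite /= diag_sandwich_offdiag // !mulg1. Qed.

Definition fixed_idem : {set 'I_m} := [set y | phi (grp 1) y == Some y].

Definition grp_act (y : 'I_m) (a : gT) : 'I_m := odflt y (phi (grp a) y).

Lemma phi_grp a : {in fixed_idem, forall y, phi (grp a) y = Some (grp_act y a)}.
Proof.
move=> y; rewrite inE => /eqP fix_y.
have := phiM (grp a) (grp a^-1) y; rewrite mul_grp mulgV fix_y /grp_act.
by case: (phi (grp a) y).
Qed.

Lemma grp_act_in a : {in fixed_idem, forall y, grp_act y a \in fixed_idem}.
Proof.
move=> y Yy; rewrite inE; apply/eqP.
by have := phiM (grp a) (grp 1) y; rewrite mul_grp mulg1 phi_grp.
Qed.

Lemma grp_act1 : {in fixed_idem, forall y, grp_act y 1 = y}.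
Proof. by move=> y Yy; have := phi_grp 1 Yy; move: Yy; rewrite inE => /eqP -> [<-]. Qed.

Lemma grp_actM a b : {in fixed_idem, forall y, grp_act y (a * b) = grp_act (grp_act y a) b}.
Proof.
move=> y Yy; have := phiM (grp a) (grp b) y.
by rewrite mul_grp !phi_grp //= phi_grp ?grp_act_in // => -[].
Qed.

Lemma grp_act_faithful a : {in fixed_idem, forall y, grp_act y a = y} -> a = 1.
Proof.
move=> fix_a; suff: phi (grp a) = phi (grp 1) by move/phi_inj => -[].
apply/ffunP => z.
have phi_grpE b : phi (grp b) z = obind (phi (grp b)) (phi (grp 1) z).
  by rewrite -phiM mul_grp mul1g.
rewrite phi_grpE [RHS]phi_grpE; case phi1z: (phi (grp 1) z) => [w|] //=.
have Yw : w \in fixed_idem by rewrite inE; have := phi_grpE 1; rewrite phi1z /= => <-.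
by rewrite !phi_grp // fix_a // grp_act1.
Qed.

Definition row_point (p : 'I_m * 'I_n.+1) : 'I_m := odflt p.1 (phi (ord0, 1, p.2) p.1).

Lemma phi_row j : {in fixed_idem, forall y, phi (ord0, 1, j) y = Some (row_point (y, j))}.
Proof.
move=> y Yy; have := phiM (ord0, 1, j) (j, 1, ord0) y.
by rewrite mul_row_col phi_grp // /row_point /=; case: (phi (ord0, 1, j) y).
Qed.

Lemma phi_grp1_row_point j : {in fixed_idem, forall y, phi (grp 1) (row_point (y, j)) = Some y}.
Proof.
move=> y Yy; have := phiM (ord0, 1, j) (grp 1) y.
by rewrite mul_row_grp1 phi_row //= => <-; move: Yy; rewrite inE => /eqP.
Qed.

Lemma row_point_fixes j j' y : y \in fixed_idem -> j != j' ->
  row_point (y, j) = row_point (y, j') -> grp_act y (g j) = y.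
Proof.
move=> Yy neq_jj' eq_row.
have := phiM (ord0, 1, j) (j, 1, ord0) y; rewrite mul_row_col phi_grp // phi_row //= eq_row.
have := phiM (ord0, 1, j') (j, 1, ord0) y.
by rewrite mul_row_col_neq 1?eq_sym // phi_grp // grp_act1 // phi_row //= => <- -[].
Qed.

Lemma row_point_inj : {in kept_pairs g grp_act fixed_idem &, injective row_point}.
Proof.
move=> [y j] [y' j']; rewrite !in_kept_pairs /=.
move=> /andP[Yy kept_yj] /andP[Yy' kept_yj'] eq_row.
have eq_yy' : y = y'.
  by have := phi_grp1_row_point j Yy; rewrite eq_row phi_grp1_row_point // => -[].
subst y'; have [->//|neq_jj'] := eqVneq j j'.
have neq_j'j : j' != j by rewrite eq_sym.
have fix_j := row_point_fixes Yy neq_jj' eq_row.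
have fix_j' := row_point_fixes Yy neq_j'j (esym eq_row).
move: kept_yj kept_yj'; rewrite /fixes_index fix_j fix_j' eqxx !andbT !negbK => j0 j'0.
by move: neq_jj'; rewrite -val_eqE (eqP j0) (eqP j'0).
Qed.

Lemma set_cost_fixed_idem_le : (set_cost g grp_act fixed_idem <= m)%N.
Proof.
by rewrite -card_kept_pairs -(card_in_imset row_point_inj) -[leqRHS]card_ord max_card.
Qed.

Lemma faithful_gset_cost_fixed_idem : faithful_gset_cost g (set_cost g grp_act fixed_idem).
Proof.
apply: faithful_gset_cost_subset.
- exact: grp_act_in.
- exact: grp_act1.
- exact: grp_actM.
- exact: grp_act_faithful.
Qed.

End LowerBound.

Lemma rees_diagonal_min_degree :
  exists d, [/\ is_least (faithful_gset_cost g) d,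
               is_least (faithful_partial_degree mul) d
             & is_least (faithful_total_degree mul) d].
Proof.
have [d least_d] := is_least_exists (faithful_gset_cost_exists g).
suff [least_total least_partial] :
    is_least (faithful_total_degree mul) d /\ is_least (faithful_partial_degree mul) d.
  by exists d.
apply: (is_least_sandwich least_d) (@faithful_total_partial_degree _ mul) _.
- by move=> c [k [act [act_ok [act_faithful ->]]]]; apply: faithful_total_degree_gset.
- move=> m [phi [phi_inj phiM]].
  exists (set_cost g (grp_act phi) (fixed_idem phi)).
    exact: faithful_gset_cost_fixed_idem.
  exact: set_cost_fixed_idem_le.
Qed.

End ReesDiagonal.

Section PermutationRepresentations.
Variables (gT : finGroupType) (k : nat).

Lemma perm_rep_raction (rho : gT -> {perm 'I_k}) :
  perm_rep rho -> injective rho ->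
  is_raction (fun x a => rho a x) /\ faithful_raction (fun x a => rho a x).
Proof.
move=> rhoM rho_inj; have rho1 : rho 1 = 1 by apply: (mulgI (rho 1)); rewrite -rhoM !mulg1.
split; first by split=> [x|x a b]; rewrite ?rho1 ?perm1 // rhoM permM.
by move=> a fix_a; apply: rho_inj; rewrite rho1; apply/permP => x; rewrite perm1 fix_a.
Qed.

Lemma raction_perm_rep (act : 'I_k -> gT -> 'I_k) :
  is_raction act -> faithful_raction act ->
  exists rho : gT -> {perm 'I_k},
    [/\ perm_rep rho, injective rho & forall a x, rho a x = act x a].
Proof.
move=> act_ok act_faithful.
have act_inj a : injective (act^~ a) := can_inj (ractionK act_ok a).
exists (fun a => perm (act_inj a)); split=> [a b|a b eq_ab|a x]; last exact: permE.
  by apply/permP => x; rewrite permM !permE /= (ractionM act_ok).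
apply: (faithful_raction_inj act_ok act_faithful) => x.
by have /permP/(_ x) := eq_ab; rewrite !permE.
Qed.

End PermutationRepresentations.

Lemma card_ord_neq0 n : #|[set i : 'I_n | val i != 0%N]| = (n - 1)%N.
Proof.
case: n => [|n]; first by apply: eq_card0 => -[].
transitivity #|[set~ (ord0 : 'I_n.+1)]|; last by rewrite cardsC1 card_ord subn1.
by apply: eq_card => i; rewrite !inE.
Qed.

Lemma gset_cost_const (gT : finGroupType) n (g0 : gT) k (act : 'I_k -> gT -> 'I_k) :
  gset_cost (fun i : 'I_n => if val i == 0%N then 1 else g0) act =
  (n * k - (n - 1) * #|[set x | act x g0 == x]|)%N.
Proof.
rewrite /gset_cost; congr (_ - _)%N.
transitivity (\sum_(x in [set x | act x g0 == x]) (n - 1))%N; last first.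
  by rewrite sum_nat_const mulnC.
rewrite [RHS]big_mkcond; apply: eq_bigr => x _; rewrite inE.
have [fix_x|nfix_x] := ifPn.
  rewrite -card_ord_neq0; apply: eq_card => i.
  by rewrite !inE; case: (val i == 0%N); rewrite //= fix_x.
by apply: eq_card0 => i; rewrite !inE; case: (val i == 0%N); rewrite //= (negbTE nfix_x).
Qed.

Lemma faithful_gset_cost_const (gT : finGroupType) n (g0 : gT) c :
  faithful_gset_cost (fun i : 'I_n => if val i == 0%N then 1 else g0) c <->
  exists k (rho : gT -> {perm 'I_k}),
    perm_rep rho /\ injective rho /\
    c = (n * k - (n - 1) * #|[set x | rho g0 x == x]|)%N.
Proof.
split=> [[k [act [act_ok [act_faithful ->]]]] | [k [rho [rhoM [rho_inj ->]]]]].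
  have [rho [rhoM rho_inj rhoE]] := raction_perm_rep act_ok act_faithful.
  exists k, rho; do 2!split=> //; rewrite gset_cost_const.
  by congr (_ - _ * _)%N; apply: eq_card => x; rewrite !inE rhoE.
have [rho_ok rho_faithful] := perm_rep_raction rhoM rho_inj.
by exists k, (fun x a => rho a x); rewrite gset_cost_const.
Qed.

Theorem proposition2p16 :
  (forall (gT : finGroupType) (n : nat) (g : 'I_n -> gT),
    (2 <= n)%N ->
    (forall i : 'I_n, val i = 0%N -> g i = 1) ->
    (forall i : 'I_n, val i <> 0%N -> g i <> 1) ->
    exists d : nat,
      is_least (fun c => exists (k : nat) (act : 'I_k -> gT -> 'I_k),
                  is_raction act /\ faithful_raction act /\ c = gset_cost g act) d /\
      is_least (faithful_partial_degree (rees_mul (diag_sandwich g))) d /\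
      is_least (faithful_total_degree (rees_mul (diag_sandwich g))) d)
  /\
  (forall (gT : finGroupType) (n : nat) (g0 : gT),
    (2 <= n)%N -> g0 <> 1 ->
    let g := fun i : 'I_n => if val i == 0%N then 1 else g0 in
    exists d : nat,
      is_least (fun c => exists (k : nat) (rho : gT -> {perm 'I_k}),
                  perm_rep rho /\ injective rho /\
                  c = (n * k - (n - 1) * #|[set x : 'I_k | rho g0 x == x]|)%N) d /\
      is_least (faithful_partial_degree (rees_mul (diag_sandwich g))) d /\
      is_least (faithful_total_degree (rees_mul (diag_sandwich g))) d).
Proof.
split=> [gT [|n] // g _ g_val0 g_neq1 | gT [|n] // g0 _ g0_neq1 g].
  by have [d [? ? ?]] := rees_diagonal_min_degree g_val0 g_neq1; exists d.
have [||d [least_cost least_partial least_total]] := @rees_diagonal_min_degree gT n g.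
- by move=> i; rewrite /g => ->.
- by move=> i /eqP/negbTE; rewrite /g => ->.
exists d; split=> //; apply: is_least_equiv least_cost => c.
exact: faithful_gset_cost_const.
Qed.
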